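(* Assume (A1)–(A2) below hold uniformly for all edges. Let $\boldsymbol u=(\rho,w)$ and $\hat{\boldsymbol u}=(\hat\rho,\hat w)$ be classical network solutions on $[0,T]$ with parameters and data $(\varepsilon,\gamma,h_\partial)$ and $(\hat\varepsilon,\hat\gamma,\hat h_\partial)$ respectively, and assume $(\hat\rho,\hat w)$ is Lipschitz on every edge. For each edge let $h^e(\tilde\rho,\tilde w)=\varepsilon^2\tilde w^2/2+P'(\tilde\rho)+gz^e$ and $m^e(\tilde\rho,\tilde w)=a^e\tilde\rho\tilde w$ (the co-state maps with the unperturbed parameter $\varepsilon$). Then at every time $$-\sum_{v\in\mathcal{V}}\sum_{e\in\mathcal{E}(v)}\big(h^e(\rho^e,w^e)-h^e(\hat\rho^e,\hat w^e)\big)(v)\,\big(m^e(\rho^e,w^e)-m^e(\hat\rho^e,\hat w^e)\big)(v)\,n^e(v)\le\hat C_\partial\big(|h_\partial-\hat h_\partial|+|\varepsilon^2-\hat\varepsilon^2|\big),$$ where $|h_\partial-\hat h_\partial|^2=\sum_{v\in\mathcal{V}_\partial}|h^v_\partial-\hat h^v_\partial|^2$ and $\hat C_\partial$ depends only on the bounds in (A1)–(A2) and the Lipschitz bounds of $(\hat\rho,\hat w)$.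
   Context: Let $(\mathcal{V},\mathcal{E})$ be a finite, connected, directed graph, each edge $e$ identified with $(0,\ell^e)$; $\mathcal{E}(v)$ the edges incident to $v$; $\mathcal{V}_0=\{v:|\mathcal{E}(v)|>1\}$, $\mathcal{V}_\partial=\{v:|\mathcal{E}(v)|=1\}$; $n^e(v)=1$ if $v$ is the end point ($x=\ell^e$) of $e$, $n^e(v)=-1$ if $v$ is its start point ($x=0$). Edge data: cross sections $a^e$, elevations $z^e$, friction coefficients $\gamma^e>0$; $g$ constant; $P:(0,\infty)\to\mathbb{R}$ smooth strictly convex. For parameter $\varepsilon\ge0$ the network problem reads on each edge $a^e\partial_\tau\rho^e+\partial_xm^e=0$, $\varepsilon^2\partial_\tau w^e+\partial_xh^e+\gamma^e|w^e|w^e=0$, $h^e=\varepsilon^2|w^e|^2/2+P'(\rho^e)+gz^e$, $m^e=a^e\rho^ew^e$; at $v\in\mathcal{V}_0$: $\sum_{e\in\mathcal{E}(v)}m^e(v)n^e(v)=0$ and $h^e(v)=h^v$ for all $e\in\mathcal{E}(v)$ (a common value); at $v\in\mathcal{V}_\partial$: $h^e(v)=h^v_\partial$. The perturbed solution uses $\hat\varepsilon$, $\hat\gamma^e$, $\hat h_\partial$ and its own enthalpy $\hat h^e=\hat\varepsilon^2|\hat w^e|^2/2+P'(\hat\rho^e)+gz^e$ in these conditions. (A1) (each edge): positive constants $\underline\rho\le\bar\rho$, $\bar w$, $\bar\varepsilon$ with $\rho P''(\rho)\ge4\bar\varepsilon^2\bar w^2$ for $\underline\rho\le\rho\le\bar\rho$;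 $0<\underline a\le a^e\le\bar a$; $|gz^e|\le\bar g\bar z$. (A2): $0\le\varepsilon,\hat\varepsilon\le\bar\varepsilon$, $0<\underline\gamma\le\gamma^e,\hat\gamma^e\le\bar\gamma$, solutions satisfy $\underline\rho\le\rho^e\le\bar\rho$, $-\bar w\le w^e\le\bar w$. A classical network solution on $[0,T]$: per edge $(\rho^e,w^e)\in C^1([0,T];L^2(0,\ell^e)^2)$ satisfying the bounds, $(h^e,m^e)\in C^0([0,T];H^1(0,\ell^e)^2)$, the edge equations holding weakly ($(a^e\partial_\tau\rho^e,q)+(\partial_xm^e,q)=0$, $(\varepsilon^2\partial_\tau w^e,r)-(h^e,\partial_xr)+(\gamma^e|w^e|w^e,r)=-[h^er]_0^{\ell^e}$ for all $q,r\in H^1(0,\ell^e)$), and the coupling and boundary conditions holding for all times. *)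

From HB Require Import structures.
From mathcomp Require Import all_boot all_order all_algebra.
From mathcomp Require Import all_classical all_reals all_analysis.
Set Implicit Arguments. Unset Strict Implicit. Unset Printing Implicit Defensive.
Import Order.TTheory GRing.Theory Num.Theory.
Import numFieldNormedType.Exports.
Local Open Scope classical_set_scope.
Local Open Scope ring_scope.

(* A finite directed graph: vertices V, edges E, edge e goes from src e
   (start point, x = 0) to tgt e (end point, x = ell e). *)
Definition incident (V E : finType) (src tgt : E -> V) (e : E) (v : V) : bool :=
  (src e == v) || (tgt e == v).

Definition adjacent (V E : finType) (src tgt : E -> V) : rel V :=
  fun u v => [exists e, ((src e == u) && (tgt e == v)) || ((src e == v) && (tgt e == u))].

Definition wf_graph (R : realType) (V E : finType) (src tgt : E -> V) (ell : E -> R) : Prop :=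
  (forall e, src e != tgt e) /\ (forall e, 0 < ell e) /\
  (forall u v, connect (adjacent src tgt) u v).

Definition degree (V E : finType) (src tgt : E -> V) (v : V) : nat :=
  #|[set e | incident src tgt e v]|.

Definition pos (R : realType) (V E : finType) (tgt : E -> V) (ell : E -> R) (e : E) (v : V) : R :=
  if tgt e == v then ell e else 0.

Definition nrm {R : realType} (V E : finType) (tgt : E -> V) (e : E) (v : V) : R :=
  if tgt e == v then 1 else -1.

Definition Iv (R : realType) (l : R) : set R := `[0, l].

Definition L2 (R : realType) (l : R) (f : R -> R) : Prop :=
  measurable_fun (Iv l) f /\
  (\int[@lebesgue_measure R]_(x in Iv l) ((f x) ^+ 2)%:E < +oo)%E.

Definition ip (R : realType) (l : R) (f g : R -> R) : R :=
  fine (\int[@lebesgue_measure R]_(x in Iv l) (f x * g x)%:E).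

Definition L2sq (R : realType) (l : R) (f : R -> R) : R := ip l f f.

(* f is (the continuous representative of) an H^1(0,l) function with weak
   derivative df *)
Definition isH1 (R : realType) (l : R) (f df : R -> R) : Prop :=
  L2 l f /\ L2 l df /\
  forall x, 0 <= x <= l -> f x = f 0 + ip x df (fun _ => 1).

Definition C1L2 (R : realType) (T l : R) (u du : R -> R -> R) : Prop :=
  (forall t, 0 <= t <= T -> L2 l (u t) /\ L2 l (du t)) /\
  (forall t, 0 <= t <= T -> forall eps : R, 0 < eps -> exists2 del : R, 0 < del &
     forall s, 0 <= s <= T -> `|s - t| < del ->
       L2sq l (fun x => u s x - u t x - (s - t) * du t x) <= eps * (s - t) ^+ 2) /\
  (forall t, 0 <= t <= T -> forall eps : R, 0 < eps -> exists2 del : R, 0 < del &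
     forall s, 0 <= s <= T -> `|s - t| < del ->
       L2sq l (fun x => du s x - du t x) <= eps).

Definition C0H1 (R : realType) (T l : R) (f df : R -> R -> R) : Prop :=
  (forall t, 0 <= t <= T -> isH1 l (f t) (df t)) /\
  (forall t, 0 <= t <= T -> forall eps : R, 0 < eps -> exists2 del : R, 0 < del &
     forall s, 0 <= s <= T -> `|s - t| < del ->
       L2sq l (fun x => f s x - f t x) + L2sq l (fun x => df s x - df t x) <= eps).

(* DP n is the n-th derivative of P on (0,oo); P smooth and strictly convex *)
Definition smooth_strictly_convex (R : realType) (P : R -> R) (DP : nat -> R -> R) : Prop :=
  (forall x, 0 < x -> DP 0%N x = P x) /\
  (forall (n : nat) (x : R), 0 < x -> is_derive x 1 (DP n) (DP n.+1 x)) /\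
  (forall x y t : R, 0 < x -> 0 < y -> x != y -> 0 < t < 1 ->
     P (t * x + (1 - t) * y) < t * P x + (1 - t) * P y).

Definition hmap (R : realType) (DP : nat -> R -> R) (g eps zx r ww : R) : R :=
  eps ^+ 2 * ww ^+ 2 / 2 + DP 1%N r + g * zx.

Definition mmap (R : realType) (ax r ww : R) : R := ax * r * ww.

Definition network_solution (R : realType) (V E : finType) (src tgt : E -> V)
  (ell : E -> R) (DP : nat -> R -> R) (g : R)
  (a z : E -> R -> R) (gam : E -> R) (eps : R) (hb : V -> R)
  (rho_lo rho_hi wbar T : R) (rho w : E -> R -> R -> R) : Prop :=
  let h := fun e t x => hmap DP g eps (z e x) (rho e t x) (w e t x) in
  let m := fun e t x => mmap (a e x) (rho e t x) (w e t x) in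
  exists drho dw dh dm : E -> R -> R -> R,
  (forall e,
     (forall t x, 0 <= t <= T -> 0 <= x <= ell e ->
        rho_lo <= rho e t x <= rho_hi /\ - wbar <= w e t x <= wbar) /\
     C1L2 T (ell e) (rho e) (drho e) /\ C1L2 T (ell e) (w e) (dw e) /\
     C0H1 T (ell e) (h e) (dh e) /\ C0H1 T (ell e) (m e) (dm e) /\
     (forall t, 0 <= t <= T -> forall q dq, isH1 (ell e) q dq ->
        ip (ell e) (fun x => a e x * drho e t x) q + ip (ell e) (dm e t) q = 0) /\
     (forall t, 0 <= t <= T -> forall r dr, isH1 (ell e) r dr ->
        eps ^+ 2 * ip (ell e) (dw e t) r - ip (ell e) (h e t) dr
        + ip (ell e) (fun x => gam e * `|w e t x| * w e t x) r
        = - (h e t (ell e) * r (ell e) - h e t 0 * r 0))) /\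
  (forall t, 0 <= t <= T -> forall v, (1 < degree src tgt v)%N ->
     \sum_(e | incident src tgt e v) m e t (pos tgt ell e v) * nrm tgt e v = 0 /\
     exists hv, forall e, incident src tgt e v -> h e t (pos tgt ell e v) = hv) /\
  (forall t, 0 <= t <= T -> forall v, degree src tgt v = 1%N ->
     forall e, incident src tgt e v -> h e t (pos tgt ell e v) = hb v).

From HB Require Import structures.
From mathcomp Require Import all_boot all_order all_algebra.
From mathcomp Require Import all_classical all_reals all_analysis.
From mathcomp Require Import ring lra.
Import Order.TTheory GRing.Theory Num.Theory.
Set Implicit Arguments. Unset Strict Implicit. Unset Printing Implicit Defensive.
Local Open Scope ring_scope.

(* The estimate is pointwise in time and vertex by vertex.  At a junction the
   two solutions have common enthalpies and conserve their fluxes, so after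
   replacing the perturbed enthalpy by its own one (with [epsh] in place of
   [eps]) the jump terms cancel; only the discrepancy
   [(eps^2 - epsh^2) wh^2 / 2] remains.  At a boundary vertex the enthalpies
   equal the boundary data.  In both cases the flux difference is bounded by
   [2 a_hi rho_hi wbar], and summing over the finitely many vertices and edges
   gives the claim. *)

Lemma ler_norm_sqrt_sum (R : rcfType) (I : finType) (P : pred I) (f : I -> R) i :
  P i -> `|f i| <= Num.sqrt (\sum_(j | P j) f j ^+ 2).
Proof.
move=> Pi; rewrite -sqrtr_sqr ler_wsqrtr // (bigD1 i) //= lerDl.
by apply: sumr_ge0 => j _; exact: sqr_ge0.
Qed.

Lemma ler_norm_sum_card (R : numDomainType) (I : finType) (P : pred I) (F : I -> R) c :
  0 <= c -> (forall i, P i -> `|F i| <= c) -> `|\sum_(i | P i) F i| <= #|I|%:R * c.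
Proof.
move=> c_ge0 F_le; apply: le_trans (ler_norm_sum _ _ _) _.
apply: (@le_trans _ _ (\sum_(i in I) c)); last by rewrite sumr_const mulr_natl.
by rewrite big_mkcond; apply: ler_sum => i _; case: ifP => [/F_le|].
Qed.

Definition junction_conditions (R : pzRingType) (I : finType) (P : pred I)
    (m h n : I -> R) : Prop :=
  \sum_(i | P i) m i * n i = 0 /\ exists hv, forall i, P i -> h i = hv.

Lemma junction_flux_sum (R : comPzRingType) (I : finType) (P : pred I)
    (h hh hh' m mh n : I -> R) :
  junction_conditions P m h n -> junction_conditions P mh hh' n ->
  \sum_(i | P i) (h i - hh i) * (m i - mh i) * n i
  = \sum_(i | P i) (hh' i - hh i) * (m i - mh i) * n i.
Proof.
move=> [m_cons [hv h_eq]] [mh_cons [hvh hh'_eq]].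
have -> : \sum_(i | P i) (h i - hh i) * (m i - mh i) * n i
  = (hv - hvh) * (\sum_(i | P i) m i * n i - \sum_(i | P i) mh i * n i)
    + \sum_(i | P i) (hh' i - hh i) * (m i - mh i) * n i.
  rewrite mulrBr !mulr_sumr -sumrB -big_split /=.
  by apply: eq_bigr => i Pi; rewrite h_eq // hh'_eq //; ring.
by rewrite m_cons mh_cons subrr mulr0 add0r.
Qed.

Lemma vertex_flux_bound (R : realDomainType) (I : finType) (P : pred I)
    (h hh hh' m mh n : I -> R) (B S D : R) :
  0 <= B -> 0 <= S -> 0 <= D ->
  (forall i, P i -> `|m i - mh i| <= B) ->
  (forall i, P i -> `|n i| = 1) ->
  (forall i, P i -> `|hh' i - hh i| <= D) ->
  (junction_conditions P m h n /\ junction_conditions P mh hh' n)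
    \/ (forall i, P i -> `|h i - hh' i| <= S) ->
  - \sum_(i | P i) (h i - hh i) * (m i - mh i) * n i <= #|I|%:R * ((S + D) * B).
Proof.
move=> B_ge0 S_ge0 D_ge0 m_le n_norm hh_le cases.
have term_le (k : I -> R) : (forall i, P i -> `|k i| <= S + D) ->
    - \sum_(i | P i) k i * (m i - mh i) * n i <= #|I|%:R * ((S + D) * B).
  move=> k_le; apply: le_trans (ler_norm _) _.
  rewrite normrN; apply: ler_norm_sum_card; first by rewrite mulr_ge0 ?addr_ge0.
  move=> i Pi; rewrite !normrM n_norm // mulr1.
  by apply: ler_pM; [exact: normr_ge0 | exact: normr_ge0 | exact: k_le | exact: m_le].
case: cases => [[junc junch] | boundary].
- rewrite (junction_flux_sum hh junc junch); apply: term_le => i Pi.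
  by rewrite (le_trans (hh_le i Pi)) // lerDr.
- apply: term_le => i Pi.
  rewrite (_ : h i - hh i = (h i - hh' i) + (hh' i - hh i)); last by ring.
  by apply: le_trans (ler_normD _ _) _; apply: lerD; [exact: boundary | exact: hh_le].
Qed.

Lemma hmap_sub_eps (R : realType) (DP : nat -> R -> R) (g eps eps' zx r ww : R) :
  hmap DP g eps' zx r ww - hmap DP g eps zx r ww = (eps' ^+ 2 - eps ^+ 2) * (ww ^+ 2 / 2).
Proof. by rewrite /hmap; ring. Qed.

Lemma normr_mmap_le (R : realType) (a_hi rho_hi wbar ax r ww : R) :
  0 <= ax <= a_hi -> 0 <= r <= rho_hi -> `|ww| <= wbar ->
  `|mmap ax r ww| <= a_hi * rho_hi * wbar.
Proof.
move=> /andP[ax_ge0 ax_le] /andP[r_ge0 r_le] ww_le.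
rewrite /mmap !normrM (ger0_norm ax_ge0) (ger0_norm r_ge0).
by rewrite !ler_pM ?mulr_ge0 ?normr_ge0.
Qed.

Lemma normr_nrm (R : realType) (V E : finType) (tgt : E -> V) (e : E) (v : V) :
  `|nrm tgt e v : R| = 1.
Proof. by rewrite /nrm; case: ifP; rewrite ?normrN normr1. Qed.

Lemma pos_in_edge (R : realType) (V E : finType) (tgt : E -> V) (ell : E -> R) e v :
  0 <= ell e -> 0 <= pos tgt ell e v <= ell e.
Proof. by rewrite /pos; case: ifP => _ ell_ge0; rewrite lexx ell_ge0. Qed.

Section NetworkVertex.
Variables (R : realType) (V E : finType) (src tgt : E -> V) (ell : E -> R).
Variables (DP : nat -> R -> R) (g : R) (a z : E -> R -> R).

Definition vertex_enthalpy (eps : R) (rho w : E -> R -> R -> R) (t : R) (v : V) (e : E) :=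
  hmap DP g eps (z e (pos tgt ell e v)) (rho e t (pos tgt ell e v)) (w e t (pos tgt ell e v)).

Definition vertex_flux (rho w : E -> R -> R -> R) (t : R) (v : V) (e : E) :=
  mmap (a e (pos tgt ell e v)) (rho e t (pos tgt ell e v)) (w e t (pos tgt ell e v)).

Definition boundary_distance (hb hbh : V -> R) : R :=
  Num.sqrt (\sum_(v : V | degree src tgt v == 1%N) (hb v - hbh v) ^+ 2).

Variables (rho_lo rho_hi wbar T t : R).

Lemma network_solution_range gam eps hb rho w e x :
  network_solution src tgt ell DP g a z gam eps hb rho_lo rho_hi wbar T rho w ->
  0 <= t <= T -> 0 <= x <= ell e ->
  rho_lo <= rho e t x <= rho_hi /\ `|w e t x| <= wbar.
Proof.
move=> sol t_range x_range; have [drho [dw [dh [dm [sol_edge _]]]]] := sol.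
by have [rho_range w_range] := (sol_edge e).1 t x t_range x_range; rewrite ler_norml.
Qed.

Lemma network_solution_junction gam eps hb rho w v :
  network_solution src tgt ell DP g a z gam eps hb rho_lo rho_hi wbar T rho w ->
  0 <= t <= T -> (1 < degree src tgt v)%N ->
  junction_conditions (fun e => incident src tgt e v) (vertex_flux rho w t v)
    (vertex_enthalpy eps rho w t v) (fun e => nrm tgt e v).
Proof.
by move=> [drho [dw [dh [dm [_ [sol_junction _]]]]]] t_range; apply: sol_junction.
Qed.

Lemma network_solution_boundary gam eps hb rho w v e :
  network_solution src tgt ell DP g a z gam eps hb rho_lo rho_hi wbar T rho w ->
  0 <= t <= T -> (degree src tgt v <= 1)%N -> incident src tgt e v ->
  degree src tgt v = 1%N /\ vertex_enthalpy eps rho w t v e = hb v.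
Proof.
move=> [drho [dw [dh [dm [_ [_ sol_boundary]]]]]] t_range deg_le1 inc.
have deg1 : degree src tgt v = 1%N.
  apply/eqP; rewrite eqn_leq deg_le1 /=.
  by apply/card_gt0P; exists e; rewrite inE.
by split; last exact: sol_boundary.
Qed.

Variable a_hi : R.
Hypothesis ell_ge0 : forall e, 0 <= ell e.
Hypothesis a_range : forall e x, 0 <= x <= ell e -> 0 <= a e x <= a_hi.
Hypothesis rho_lo_ge0 : 0 <= rho_lo.

Lemma network_vertex_flux_le gam eps hb rho w v e :
  network_solution src tgt ell DP g a z gam eps hb rho_lo rho_hi wbar T rho w ->
  0 <= t <= T -> `|vertex_flux rho w t v e| <= a_hi * rho_hi * wbar.
Proof.
move=> sol t_range; have x_range := pos_in_edge tgt v (ell_ge0 e).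
have [/andP[rho_ge rho_le] w_le] := network_solution_range sol t_range x_range.
apply: normr_mmap_le => //; first exact: a_range.
by rewrite rho_le (le_trans rho_lo_ge0).
Qed.

Hypotheses (a_hi_ge0 : 0 <= a_hi) (rho_hi_ge0 : 0 <= rho_hi) (wbar_ge0 : 0 <= wbar).

Lemma network_vertex_bound gam gamh eps epsh hb hbh rho w rhoh wh v :
  network_solution src tgt ell DP g a z gam eps hb rho_lo rho_hi wbar T rho w ->
  network_solution src tgt ell DP g a z gamh epsh hbh rho_lo rho_hi wbar T rhoh wh ->
  0 <= t <= T ->
  - \sum_(e | incident src tgt e v)
      (vertex_enthalpy eps rho w t v e - vertex_enthalpy eps rhoh wh t v e)
      * (vertex_flux rho w t v e - vertex_flux rhoh wh t v e) * nrm tgt e v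
  <= #|E|%:R * ((boundary_distance hb hbh + `|eps ^+ 2 - epsh ^+ 2| * (wbar ^+ 2 / 2))
                * (2 * a_hi * rho_hi * wbar)).
Proof.
move=> sol solh t_range.
apply: (vertex_flux_bound (hh' := vertex_enthalpy epsh rhoh wh t v)).
- by rewrite !mulr_ge0.
- exact: sqrtr_ge0.
- by rewrite mulr_ge0 ?divr_ge0 ?sqr_ge0.
- move=> e _; have := ler_normB (vertex_flux rho w t v e) (vertex_flux rhoh wh t v e).
  have := network_vertex_flux_le v e sol t_range.
  have := network_vertex_flux_le v e solh t_range.
  lra.
- by move=> e _; exact: normr_nrm.
- move=> e _; rewrite /vertex_enthalpy hmap_sub_eps -normrN -mulNr opprB normrM.
  have x_range := pos_in_edge tgt v (ell_ge0 e).
  have [_ /ler_normlP[wh_ge wh_le]] := network_solution_range solh t_range x_range.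
  rewrite ler_wpM2l // ger0_norm ?divr_ge0 ?sqr_ge0 //; nra.
- case: (ltnP 1 (degree src tgt v)) => [deg_gt1 | deg_le1].
    by left; split; [move: sol | move: solh] => /network_solution_junction; apply.
  right=> e inc.
  have [deg1 ->] := network_solution_boundary sol t_range deg_le1 inc.
  have [_ ->] := network_solution_boundary solh t_range deg_le1 inc.
  by apply: (ler_norm_sqrt_sum (fun u => hb u - hbh u)); rewrite /= deg1.
Qed.
End NetworkVertex.

Theorem lemma5p1 (R : realType) (V E : finType) (src tgt : E -> V) (ell : E -> R)
  (Hgraph : wf_graph src tgt ell)
  (rho_lo rho_hi wbar epsbar a_lo a_hi gzbar gam_lo gam_hi Lip : R)
  (Hpos : (0 < rho_lo <= rho_hi) /\ 0 < wbar /\ 0 < epsbar /\ (0 < a_lo <= a_hi) /\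
              0 <= gzbar /\ (0 < gam_lo <= gam_hi) /\ 0 <= Lip) :
  exists C : R, forall (P : R -> R) (DP : nat -> R -> R) (g : R),
  smooth_strictly_convex P DP ->
  (* (A1) *)
  (forall r, rho_lo <= r <= rho_hi -> r * DP 2%N r >= 4 * epsbar ^+ 2 * wbar ^+ 2) ->
  forall (a z : E -> R -> R) (gam gamh : E -> R) (eps epsh : R) (hb hbh : V -> R)
         (T : R) (rho w rhoh wh : E -> R -> R -> R),
  (forall e, measurable_fun (Iv (ell e)) (a e) /\ measurable_fun (Iv (ell e)) (z e)) ->
  (forall e x, 0 <= x <= ell e -> a_lo <= a e x <= a_hi /\ `|g * z e x| <= gzbar) ->
  (* (A2) *)
  0 <= eps <= epsbar -> 0 <= epsh <= epsbar ->
  (forall e, gam_lo <= gam e <= gam_hi /\ gam_lo <= gamh e <= gam_hi) ->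
  0 < T ->
  network_solution src tgt ell DP g a z gam eps hb rho_lo rho_hi wbar T rho w ->
  network_solution src tgt ell DP g a z gamh epsh hbh rho_lo rho_hi wbar T rhoh wh ->
  (* (rhoh, wh) Lipschitz on every edge with constant Lip *)
  (forall e t s x y, 0 <= t <= T -> 0 <= s <= T -> 0 <= x <= ell e -> 0 <= y <= ell e ->
     `|rhoh e t x - rhoh e s y| <= Lip * (`|t - s| + `|x - y|) /\
     `|wh e t x - wh e s y| <= Lip * (`|t - s| + `|x - y|)) ->
  forall t, 0 <= t <= T ->
  - (\sum_(v : V) \sum_(e | incident src tgt e v)
       (hmap DP g eps (z e (pos tgt ell e v)) (rho e t (pos tgt ell e v)) (w e t (pos tgt ell e v))
        - hmap DP g eps (z e (pos tgt ell e v)) (rhoh e t (pos tgt ell e v)) (wh e t (pos tgt ell e v)))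
     * (mmap (a e (pos tgt ell e v)) (rho e t (pos tgt ell e v)) (w e t (pos tgt ell e v))
        - mmap (a e (pos tgt ell e v)) (rhoh e t (pos tgt ell e v)) (wh e t (pos tgt ell e v)))
     * nrm tgt e v)
  <= C * (Num.sqrt (\sum_(v : V | degree src tgt v == 1%N) (hb v - hbh v) ^+ 2)
          + `|eps ^+ 2 - epsh ^+ 2|).
Proof.
case: Hpos => /andP[rho_lo_gt0 rho_lo_le] [wbar_gt0 [_ [/andP[a_lo_gt0 a_lo_le] _]]].
have [_ [ell_gt0 _]] := Hgraph.
pose B := 2 * a_hi * rho_hi * wbar; pose Q := wbar ^+ 2 / 2.
exists (#|V|%:R * (#|E|%:R * (B * (1 + Q)))).
move=> P DP g _ _ a z gam gamh eps epsh hb hbh T rho w rhoh wh _ a_bounds _ _ _ _ sol solh _.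
move=> t t_range.
have ell_ge0 e : 0 <= ell e by exact: ltW.
have a_range e x : 0 <= x <= ell e -> 0 <= a e x <= a_hi.
  by move=> /(a_bounds e)[/andP[a_ge a_le] _]; rewrite a_le (le_trans (ltW a_lo_gt0)).
have a_hi_ge0 : 0 <= a_hi by rewrite (le_trans (ltW a_lo_gt0)).
have rho_hi_ge0 : 0 <= rho_hi by rewrite (le_trans (ltW rho_lo_gt0)).
have B_ge0 : 0 <= B by rewrite /B !mulr_ge0 // ltW.
have Q_ge0 : 0 <= Q by rewrite /Q divr_ge0 ?sqr_ge0.
have S_ge0 := sqrtr_ge0 (\sum_(v : V | degree src tgt v == 1%N) (hb v - hbh v) ^+ 2).
have K_ge0 := normr_ge0 (eps ^+ 2 - epsh ^+ 2).
apply: (@le_trans _ _ (#|V|%:R * (#|E|%:R *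
  ((boundary_distance src tgt hb hbh + `|eps ^+ 2 - epsh ^+ 2| * Q) * B)))).
  rewrite -sumrN mulr_natl -sumr_const; apply: ler_sum => v _.
  exact: (network_vertex_bound ell_ge0 a_range (ltW rho_lo_gt0) a_hi_ge0 rho_hi_ge0
    (ltW wbar_gt0) v sol solh t_range).
rewrite -2!mulrA; do 2 apply: ler_wpM2l => //.
have := mulr_ge0 B_ge0 K_ge0; have := mulr_ge0 (mulr_ge0 B_ge0 Q_ge0) S_ge0.
rewrite /boundary_distance; nra.
Qed.
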